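(* Let $H\in\mathbb{C}^{n\times n}$ be PT-symmetric, i.e. there exists a matrix $P\in\mathbb{C}^{n\times n}$ with $P^{2}=I$ such that $P\bar{H}=HP$, where $\bar{H}$ is the entrywise complex conjugate of $H$. Then $H$ is pseudo-Hermitian, i.e. there exist a non-singular Hermitian matrix $G\in\mathbb{C}^{n\times n}$ and a Hermitian matrix $S\in\mathbb{C}^{n\times n}$ such that $H=-G^{-1}S$. This holds regardless of whether $H$ is diagonalizable.
   Context: Here $P$ is a (complex-linear) matrix representing a parity operator and $T$ is complex conjugation; the condition $PTH=HPT$ is equivalent to $P\bar{H}-HP=0$. Equivalently, with $A=-iH$, pseudo-Hermiticity of $H$ means $A=iG^{-1}S$ for some non-singular Hermitian $G$ and Hermitian $S$. *)

From HB Require Import structures.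
From mathcomp Require Import all_boot all_order all_algebra.
From mathcomp Require Import complex.
From mathcomp Require Import Rstruct.
From Stdlib Require Import Reals.
Set Implicit Arguments. Unset Strict Implicit. Unset Printing Implicit Defensive.
Import Order.TTheory GRing.Theory Num.Theory.
Local Open Scope ring_scope.

Notation Cplx := (complex Rdefinitions.R).

Definition conjmx (m n : nat) (A : 'M[Cplx]_(m, n)) : 'M[Cplx]_(m, n) :=
  map_mx (fun z : Cplx => z^*) A.

Definition hermitian (n : nat) (A : 'M[Cplx]_n) : Prop := conjmx A^T = A.

Definition PT_symmetric (n : nat) (H : 'M[Cplx]_n) : Prop :=
  exists P : 'M[Cplx]_n, P *m P = 1%:M /\ P *m conjmx H = H *m P.

Definition pseudo_hermitian (n : nat) (H : 'M[Cplx]_n) : Prop :=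
  exists G S : 'M[Cplx]_n,
    [/\ hermitian G, G \in unitmx, hermitian S & H = - (invmx G *m S)].

From Pilot Require Import Defs.
From mathcomp Require Import all_boot all_order all_algebra.
From mathcomp Require Import perm complex Rstruct zify.

(* Since P^2 = 1, the relation P \bar H = H P makes H similar to \bar H, and
   every complex matrix is similar to its transpose; hence X H = H^† X for some
   invertible X.  The solutions of this linear equation are stable under
   X |-> X^†, so the Hermitian matrices X + X^† and i (X - X^†) solve it;
   det (k (X + X^†) + i (X - X^†)) is a nonzero polynomial in k, as at k = i it
   is det (2 i X), so some natural k gives a Hermitian invertible solution G.
   Then S := - G H is Hermitian and H = - G^-1 S.

   Similarity to the transpose is proved by induction on the dimension,
   splitting off a generalized eigenspace, on which A - l is nilpotent.  If
   N^(m+1) = 0 and (N^m)_ij <> 0, the Krylov rows e_i N^a and columns N^b e_j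
   (a, b <= m) have the Hankel Gram matrix ((N^(a+b))_ij), which is
   anti-triangular with nonzero anti-diagonal, hence invertible.  As it is
   symmetric, it conjugates N on the span of the rows to its transpose, and the
   kernel of the columns is an invariant complement of smaller dimension. *)

Set Implicit Arguments. Unset Strict Implicit. Unset Printing Implicit Defensive.
Import GRing.Theory Num.Theory.
Local Open Scope ring_scope.
Local Open Scope sesquilinear_scope.

Lemma nilpotent_exact_index (R : nzRingType) (x : R) k :
  x ^+ k = 0 -> exists2 m, x ^+ m.+1 = 0 & x ^+ m != 0.
Proof.
elim: k => [|k IHk] xk; first by move: (oner_neq0 R); rewrite -(expr0 x) xk eqxx.
by have [/IHk | xk0] := eqVneq (x ^+ k) 0; last exists k.
Qed.

Lemma trmxX (R : comPzRingType) n (A : 'M[R]_n) e : (A ^+ e)^T = A^T ^+ e.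
Proof.
elim: e => [|e IHe]; first by rewrite !expr0 trmx1.
by rewrite exprS exprSr -!mulmxE trmx_mul IHe.
Qed.

Lemma mulmx_exprD (R : pzSemiRingType) n (A : 'M[R]_n) p q :
  A ^+ p *m A ^+ q = A ^+ (p + q).
Proof. by rewrite exprD. Qed.

Section TrmxSimilar.
Variable F : fieldType.

(* [conjmx U A] is MathComp's [U *m A *m pinvmx U], not the entrywise conjugation
   [Defs.conjmx]. *)
Definition trmx_similar n (A : 'M[F]_n) :=
  exists2 Y : 'M_n, Y \in unitmx & Y *m A = A^T *m Y.

Lemma trmx_similar_intertwine m n (A : 'M[F]_n) (Q : 'M_(m, n)) (D : 'M_m) :
  row_free Q -> row_full Q -> Q *m A = D *m Q -> trmx_similar D -> trmx_similar A.
Proof.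
move=> Qfree Qfull QA [Y Yu YD]; exists (Q^T *m Y *m Q).
  rewrite -row_free_unit /row_free !mxrankMfree ?row_free_unit //.
  by rewrite mxrank_tr.
rewrite -(mulmxA _ Q A) QA mulmxA -(mulmxA Q^T) YD mulmxA -trmx_mul -QA trmx_mul.
by rewrite !mulmxA.
Qed.

Lemma trmx_similar_block k1 k2 (B1 : 'M[F]_k1) (B2 : 'M_k2) :
  trmx_similar B1 -> trmx_similar B2 -> trmx_similar (block_mx B1 0 0 B2).
Proof.
move=> [Y1 Y1u Y1B] [Y2 Y2u Y2B]; exists (block_mx Y1 0 0 Y2).
  by rewrite unitmxE det_ublock unitrM -!unitmxE Y1u Y2u.
by rewrite tr_block_mx !mulmx_block !trmx0 !mulmx0 !mul0mx !addr0 !add0r Y1B Y2B.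
Qed.

Lemma trmx_similar_direct_sum n (A : 'M[F]_n) k1 k2
    (U1 : 'M_(k1, n)) (U2 : 'M_(k2, n)) :
  stablemx U1 A -> stablemx U2 A -> row_free U1 -> row_free U2 ->
  (U1 :&: U2 = 0)%MS -> (k1 + k2 = n)%N ->
  trmx_similar (conjmx U1 A) -> trmx_similar (conjmx U2 A) -> trmx_similar A.
Proof.
move=> U1A U2A U1free U2free U12 k12 simU1 simU2.
have rkU : \rank (col_mx U1 U2) = (k1 + k2)%N.
  by rewrite -addsmxE mxrank_disjoint_sum // (eqP U1free) (eqP U2free).
apply: (trmx_similar_intertwine (Q := col_mx U1 U2) _ _ _
  (trmx_similar_block simU1 simU2)).
- by rewrite /row_free rkU.
- by rewrite /row_full rkU k12.
- by rewrite mul_col_mx mul_block_col !mul0mx addr0 add0r !mulmxKpV.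
Qed.

Lemma trmx_similarD_scalar n (A : 'M[F]_n) a :
  trmx_similar A -> trmx_similar (A + a%:M).
Proof.
move=> [Y Yu YA]; exists Y => //.
by rewrite [_^T]linearD /= tr_scalar_mx mulmxDl mulmxDr YA scalar_mxC.
Qed.

Lemma trmx_similar_conjmx k n (A : 'M[F]_n) (U : 'M_(k, n)) (V : 'M_(n, k)) :
  stablemx U A -> U *m V \in unitmx ->
  (U *m V)^T = U *m V -> (U *m A *m V)^T = U *m A *m V ->
  trmx_similar (conjmx U A).
Proof.
move=> UA Gu Gsym GAsym; set G := U *m V in Gu Gsym *; set D := conjmx U A.
have DG : D *m G = U *m A *m V by rewrite mulmxA mulmxKpV.
have GDT : G *m D^T = D *m G by rewrite -{1}Gsym -trmx_mul DG GAsym.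
exists (invmx G); first by rewrite unitmx_inv.
clearbody G D; have := congr1 (fun X => invmx G *m X *m invmx G) GDT.
by rewrite /= !mulmxA mulVmx // mul1mx mulmxK // => <-.
Qed.

Lemma row_free_gram k n (U : 'M[F]_(k, n)) (V : 'M_(n, k)) :
  U *m V \in unitmx -> row_free U.
Proof.
by move=> Gu; apply/row_freeP; exists (V *m invmx (U *m V)); rewrite mulmxA mulmxV.
Qed.

Lemma capmx_kermx_gram k n (U : 'M[F]_(k, n)) (V : 'M_(n, k)) :
  U *m V \in unitmx -> (U :&: kermx V = 0)%MS.
Proof.
move=> Gu; apply/eqP/rowV0P => x; rewrite sub_capmx.
case/andP=> /submxP[w ->] /sub_kermxP; rewrite -mulmxA => wG.
by rewrite -[w](mulmxK Gu) wG !mul0mx.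
Qed.

Lemma mxrank_kermx_gram k n (U : 'M[F]_(k, n)) (V : 'M_(n, k)) :
  U *m V \in unitmx -> (k + \rank (kermx V))%N = n.
Proof.
rewrite -row_free_unit => /eqP rkG.
have rkV : \rank V = k.
  by apply/eqP; rewrite eqn_leq rank_leq_col -{1}rkG mxrankM_maxr.
by rewrite mxrank_ker rkV subnKC // -rkV rank_leq_row.
Qed.

Lemma unitmx_hankel (h : nat -> F) m :
  (forall e, (m < e)%N -> h e = 0) -> h m != 0 ->
  \matrix_(a < m.+1, b < m.+1) h (a + b)%N \in unitmx.
Proof.
move=> h_gt hm; set Hk := \matrix_(a, b) _.
pose s := perm (@rev_ord_inj m.+1).
suff : row_perm s Hk \in unitmx by rewrite row_permE unitmx_mul => /andP[].
rewrite unitmxE unitfE det_trig.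
  rewrite (eq_bigr (fun=> h m)) ?prodr_const ?expf_neq0 // => a _.
  by rewrite !mxE permE /=; congr h; have := ltn_ord a; lia.
apply/is_trig_mxP => a b ab; rewrite !mxE permE /= h_gt //.
by have := ltn_ord b; lia.
Qed.

Definition krylov n (u : 'rV[F]_n) (N : 'M_n) k : 'M_(k, n) :=
  \matrix_(a < k) (u *m N ^+ a).

Lemma krylov_stable n (u : 'rV[F]_n) (N : 'M_n) k :
  N ^+ k = 0 -> stablemx (krylov u N k) N.
Proof.
move=> Nk; apply/row_subP => a; rewrite row_mul rowK -mulmxA mulmxE -exprSr.
have [ak | ka] := ltnP a.+1 k.
  by have := row_sub (Ordinal ak) (krylov u N k); rewrite rowK.
by rewrite -(subnKC ka) exprD Nk mul0r mulmx0 sub0mx.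
Qed.

Section KrylovGram.
Variables (n : nat) (N : 'M[F]_n) (m : nat) (i j : 'I_n).
Hypotheses (Nm : N ^+ m.+1 = 0) (Nm_ij : (N ^+ m) i j != 0).

Local Notation Kr := (krylov (delta_mx 0 i) N m.+1).
Local Notation Kc := (krylov (delta_mx 0 j) N^T m.+1)^T.

Lemma krylov_mulmxE (M : 'M_n) a b :
  (Kr *m M *m Kc) a b = (N ^+ a *m M *m N ^+ b) i j.
Proof.
have entryE p q (X : 'M[F]_(p, q)) r s :
    X r s = ((delta_mx 0 r : 'rV_p) *m X *m (delta_mx s 0 : 'cV_q)) 0 0.
  by rewrite -rowE -colE !mxE.
rewrite entryE [RHS]entryE !mulmxA -rowE rowK -!mulmxA -colE -tr_row rowK.
by rewrite trmx_mul -trmxX trmxK trmx_delta !mulmxA.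
Qed.

Lemma krylov_gram_sym e : (Kr *m N ^+ e *m Kc)^T = Kr *m N ^+ e *m Kc.
Proof.
apply/matrixP => a b; rewrite mxE !krylov_mulmxE !mulmx_exprD.
by congr ((N ^+ _) i j); lia.
Qed.

Lemma krylov_gram_unit : Kr *m Kc \in unitmx.
Proof.
have -> : Kr *m Kc = \matrix_(a, b) (N ^+ (a + b)) i j.
  apply/matrixP => a b.
  by rewrite -[Kr]mulmx1 krylov_mulmxE mulmx1 mulmx_exprD !mxE.
apply: (@unitmx_hankel (fun e => (N ^+ e) i j)) Nm_ij => e me.
by rewrite -(subnKC me) exprD Nm mul0r mxE.
Qed.

Lemma krylov_stable_ker : stablemx (kermx Kc) N.
Proof.
have /submxP[Z NZ] : stablemx (krylov (delta_mx 0 j) N^T m.+1) N^T.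
  by apply: krylov_stable; rewrite -trmxX Nm trmx0.
have NKc : N *m Kc = Kc *m Z^T by apply: trmx_inj; rewrite !trmx_mul !trmxK.
by apply/sub_kermxP; rewrite -mulmxA NKc mulmxA mulmx_ker mul0mx.
Qed.

Lemma rank_krylov_ker : (\rank (kermx Kc) < n)%N.
Proof. by have := mxrank_kermx_gram krylov_gram_unit; lia. Qed.

Lemma trmx_similar_krylov :
  trmx_similar (restrictmx (kermx Kc) N) -> trmx_similar N.
Proof.
move=> simK; apply: (trmx_similar_direct_sum (krylov_stable _ Nm) _ _ _ _ _ _ simK).
- by rewrite stablemx_row_base krylov_stable_ker.
- exact: row_free_gram krylov_gram_unit.
- exact: row_base_free.
- apply/eqP; rewrite (eqmx_eq0 (cap_eqmx (eqmx_refl Kr) (eq_row_base _))).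
  by rewrite capmx_kermx_gram // krylov_gram_unit.
- exact: mxrank_kermx_gram krylov_gram_unit.
- apply: trmx_similar_conjmx (krylov_stable _ Nm) krylov_gram_unit _ _.
    by have := krylov_gram_sym 0; rewrite expr0 mulmx1.
  exact: krylov_gram_sym 1.
Qed.

End KrylovGram.

Lemma trmx_similar_nilpotent n (N : 'M[F]_n.+1) k :
  (forall l, (l < n.+1)%N -> forall B : 'M[F]_l, trmx_similar B) ->
  N ^+ k = 0 -> trmx_similar N.
Proof.
move=> IH /nilpotent_exact_index[m Nm /matrix0Pn[i [j Nm_ij]]].
by apply: (trmx_similar_krylov Nm Nm_ij); apply/IH/(rank_krylov_ker Nm Nm_ij).
Qed.

End TrmxSimilar.

Lemma kermxpoly_full (F : fieldType) n (A : 'M[F]_n.+1) p :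
  \rank (kermxpoly A p) = n.+1 -> horner_mx A p = 0.
Proof.
rewrite mxrank_ker => rk; apply/eqP; rewrite -mxrank_eq0.
by have := rank_leq_row (horner_mx A p); lia.
Qed.

Lemma trmx_similar_kermxpoly (F : fieldType) n (A : 'M[F]_n.+1) p q :
  coprimep p q -> mxminpoly A %| p * q ->
  trmx_similar (restrictmx (kermxpoly A p) A) ->
  trmx_similar (restrictmx (kermxpoly A q) A) -> trmx_similar A.
Proof.
move=> pq Apq; apply: trmx_similar_direct_sum;
  rewrite ?row_base_free ?stablemx_row_base ?comm_mx_stable_kermxpoly //.
  apply/eqP; rewrite (eqmx_eq0 (cap_eqmx (eq_row_base _) (eq_row_base _))).
  by rewrite mxdirect_kermxpoly.
rewrite -mxrank_disjoint_sum ?mxdirect_kermxpoly // -(kermxpolyM A pq).1.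
by rewrite (kermxpoly_min Apq).1 mxrank1.
Qed.

Lemma trmx_similar_closed (F : closedFieldType) n (A : 'M[F]_n) : trmx_similar A.
Proof.
elim/ltn_ind: n A => -[|n] IH A; first by exists 1%:M; rewrite ?unitmx1 // !thinmx0.
have [l charA_l] : exists l, root (char_poly A) l.
  by apply/closed_rootP; rewrite size_char_poly.
have [mu [q /implyP ql charA]] := multiplicity_XsubC (char_poly A) l.
have {}ql : ~~ root q l by apply: ql; rewrite monic_neq0 // char_poly_monic.
set p := ('X - l%:P) ^+ mu.
have pq : coprimep p q by rewrite coprimep_expl // coprimep_sym coprimep_XsubC.
have Apq : mxminpoly A %| p * q by rewrite mulrC -charA mxminpoly_dvd_char.
have rk_q : (\rank (kermxpoly A q) < n.+1)%N.
  rewrite ltn_neqAle rank_leq_row andbT.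
  apply: contra ql => /eqP /kermxpoly_full qA0.
  by apply: root_dvdp (mxminpoly_min qA0) _; rewrite root_mxminpoly.
have [rk_p | rk_p] := ltnP (\rank (kermxpoly A p)) n.+1.
  by apply: trmx_similar_kermxpoly pq Apq _ _; apply: IH.
have pA0 : horner_mx A p = 0.
  by apply: kermxpoly_full; apply/eqP; rewrite eqn_leq rank_leq_row.
rewrite -(subrK l%:M A); apply/trmx_similarD_scalar.
apply: (trmx_similar_nilpotent IH (k := mu)).
by rewrite -pA0 rmorphXn /= rmorphB /= horner_mx_X horner_mx_C.
Qed.

Lemma poly_nat_nonroot (R : numDomainType) (q : {poly R}) :
  q != 0 -> exists k : nat, ~~ root q k%:R.
Proof.
move=> q0; pose s := [seq k%:R : R | k <- iota 0 (size q)].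
have s_uniq : uniq s.
  by rewrite map_inj_uniq ?iota_uniq // => a b /eqP; rewrite eqr_nat => /eqP.
have : ~~ all (root q) s.
  by apply/negP => /(max_poly_roots q0)/(_ s_uniq); rewrite size_map size_iota ltnn.
by case/allPn => _ /mapP[k _ ->]; exists k.
Qed.

Lemma pencil_unitmx_nat (R : numFieldType) n (M1 M2 : 'M[R]_n) z :
  z *: M1 + M2 \in unitmx -> exists k : nat, k%:R *: M1 + M2 \in unitmx.
Proof.
pose Q : 'M[{poly R}]_n := 'X *: map_mx polyC M1 + map_mx polyC M2.
have QE t : (\det Q).[t] = \det (t *: M1 + M2).
  rewrite -[_.[t]]/(horner_eval t (\det Q)) -det_map_mx; congr (\det _).
  by apply/matrixP => i j; rewrite !mxE /= horner_evalE !hornerE.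
move=> zM; have Q0 : \det Q != 0.
  by apply: contraTneq zM => Q0; rewrite unitmxE unitfE -QE Q0 horner0 eqxx.
by have [k Qk] := poly_nat_nonroot Q0; exists k; rewrite unitmxE unitfE -QE.
Qed.

Section ConjugateTranspose.
Variable C : numClosedFieldType.

Lemma trmxCD m n (A B : 'M[C]_(m, n)) : (A + B) ^t* = A ^t* + B ^t*.
Proof. by rewrite [(A + B)^T]linearD map_mxD. Qed.

Lemma trmxCB m n (A B : 'M[C]_(m, n)) : (A - B) ^t* = A ^t* - B ^t*.
Proof. by rewrite [(A - B)^T]linearB map_mxB. Qed.

Lemma trmxCZ m n a (A : 'M[C]_(m, n)) : (a *: A) ^t* = a^* *: A ^t*.
Proof. by rewrite [(a *: A)^T]linearZ map_mxZ. Qed.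

Lemma trmxCM m n p (A : 'M[C]_(m, n)) (B : 'M_(n, p)) :
  (A *m B) ^t* = B ^t* *m A ^t*.
Proof. by rewrite trmx_mul map_mxM. Qed.

Lemma hermitian_intertwiner n (H X : 'M[C]_n) :
  X \in unitmx -> X *m H = H ^t* *m X ->
  exists G, [/\ G ^t* = G, G \in unitmx & G *m H = H ^t* *m G].
Proof.
move=> Xu XH; have XsH : X ^t* *m H = H ^t* *m X ^t*.
  by rewrite -[in LHS](trmxCK H) -trmxCM -XH trmxCM.
pose M1 := X + X ^t*; pose M2 := 'i *: (X - X ^t*).
have M1H : M1 *m H = H ^t* *m M1 by rewrite mulmxDl mulmxDr XH XsH.
have M2H : M2 *m H = H ^t* *m M2.
  by rewrite -scalemxAl -scalemxAr mulmxBl mulmxBr XH XsH.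
have M1h : M1 ^t* = M1 by rewrite trmxCD trmxCK addrC.
have M2h : M2 ^t* = M2.
  by rewrite trmxCZ trmxCB trmxCK conjCi scaleNr -scalerN opprB.
have [k kM12] : exists k : nat, k%:R *: M1 + M2 \in unitmx.
  apply: (@pencil_unitmx_nat _ _ _ _ 'i).
  rewrite -scalerDr addrACA subrr addr0 -mulr2n -scaler_nat scalerA unitmxZ //.
  by rewrite unitfE mulf_neq0 ?neq0Ci // pnatr_eq0.
exists (k%:R *: M1 + M2); split => //.
- by rewrite trmxCD trmxCZ conjC_nat M1h M2h.
- by rewrite mulmxDl mulmxDr -scalemxAl -scalemxAr M1H M2H.
Qed.

End ConjugateTranspose.

Lemma PT_symmetric_intertwiner n (H : 'M[Cplx]_n) :
  PT_symmetric H -> exists2 X, X \in unitmx & X *m H = H ^t* *m X.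
Proof.
case=> P [PP PH]; have [Pu _] := mulmx1_unit PP.
have PHP : P *m H *m P = Defs.conjmx H by rewrite -mulmxA -PH mulmxA PP mul1mx.
have PHc : P *m H = Defs.conjmx H *m P by rewrite -PHP -mulmxA PP mulmx1.
have [Y Yu YH] := trmx_similar_closed (Defs.conjmx H).
exists (Y *m P); first by rewrite unitmx_mul Yu Pu.
by rewrite -mulmxA PHc mulmxA YH map_trmx mulmxA.
Qed.

Lemma intertwiner_pseudo_hermitian n (H G : 'M[Cplx]_n) :
  G ^t* = G -> G \in unitmx -> G *m H = H ^t* *m G -> pseudo_hermitian H.
Proof.
move=> Gh Gu GH; exists G, (- (G *m H)); split => //.
  change ((- (G *m H)) ^t* = - (G *m H)).
  by rewrite -scaleN1r trmxCZ rmorphN1 trmxCM Gh -GH.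
by rewrite mulmxN opprK mulmxA mulVmx // mul1mx.
Qed.

Theorem corollary1 (n : nat) (H : 'M[Cplx]_n) :
  PT_symmetric H -> pseudo_hermitian H.
Proof.
move=> /PT_symmetric_intertwiner[X Xu XH].
have [G [Gh Gu GH]] := hermitian_intertwiner Xu XH.
exact: intertwiner_pseudo_hermitian Gh Gu GH.
Qed.
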